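(* Let $S$ be an $E$-solid locally inverse semigroup and $\rho$ an inverse semigroup congruence on $S$ such that each idempotent $\rho$-class (i.e. each class $e\rho$ with $e$ an idempotent of $S$), regarded as a subsemigroup of $S$, is a completely simple semigroup. Then there exist a completely simple semigroup $K$ and an action of the inverse semigroup $T=S/\rho$ on $K$ by endomorphisms on the left such that the extension $(S,\rho)$ can be embedded into the $\lambda$-semidirect product extension $(K\rtimes_\lambda T,\vartheta_2)$; that is, there is an injective homomorphism $\psi\colon S\to K\rtimes_\lambda T$ such that the congruence on $S$ induced by $\psi\vartheta_2^\natural$ (equivalently, by $\psi$ followed by the second projection onto $T$) is exactly $\rho$.
   Context: A semigroup is locally inverse if it is regular and every local submonoid $eSe$ ($e$ idempotent) is an inverse semigroup. A semigroup is $E$-solid if the subsemigroup generated by its idempotents is completely regular. A congruence $\rho$ on $S$ is an inverse semigroup congruence if $S/\rho$ is an inverse semigroup. An extension by an inverse semigroup is a pair $(S,\rho)$ with $\rho$ an inverse semigroup congruence on $S$. If $(S,\rho)$ and $(U,\sigma)$ are such extensions, an embedding of $(S,\rho)$ into $(U,\sigma)$ is an injective homomorphism $\psi\colon S\to U$ such that the kernel of $\psi\sigma^\natural$ equals $\rho$. Let $K$ be a semigroup and $T$ an inverse semigroup; $T$ acts on $K$ (by endomorphisms on the left) if an antihomomorphism $t\mapsto\varepsilon_t$ from $T$ to the endomorphism monoid of $K$ is given (so $\varepsilon_u\varepsilon_t=\varepsilon_{tu}$, maps written on the right); write ${}^t a$ for $a\varepsilon_t$. The $\lambda$-semidirect product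 $K\rtimes_\lambda T$ is the set $\{(a,t)\in K\times T: {}^{tt^{-1}}a=a\}$ with multiplication $(a,t)(b,u)=({}^{(tu)(tu)^{-1}}a\cdot {}^t b,\ tu)$. The $\lambda$-semidirect product extension of $K$ by $T$ is the pair $(K\rtimes_\lambda T,\vartheta_2)$ where $\vartheta_2$ is the congruence induced by the second projection $(a,t)\mapsto t$. *)

From Stdlib Require Import ClassicalEpsilon.

Set Implicit Arguments.

Record Semigroup := {
  sg_car :> Type;
  sg_op : sg_car -> sg_car -> sg_car;
  sg_assoc : forall x y z, sg_op x (sg_op y z) = sg_op (sg_op x y) z
}.

Arguments sg_op {s} _ _.
Notation "x * y" := (sg_op x y) (at level 40, left associativity).

Section Basics.
Variable S : Semigroup.

Definition subset := S -> Prop.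

Definition idempotent (e : S) : Prop := e * e = e.

Definition is_inverse (a x : S) : Prop := a * x * a = a /\ x * a * x = x.

Definition closed (A : subset) : Prop :=
  forall x y, A x -> A y -> A (x * y).

Definition regular_sub (A : subset) : Prop :=
  forall a, A a -> exists x, A x /\ a * x * a = a.

Definition inverse_sub (A : subset) : Prop :=
  closed A /\
  forall a, A a -> exists x, A x /\ is_inverse a x /\
                     forall y, A y -> is_inverse a y -> y = x.

Definition whole : subset := fun _ => True.

Definition regular : Prop := regular_sub whole.
Definition inverse_semigroup : Prop := inverse_sub whole.

Definition local_sub (e : S) : subset := fun x => exists s, x = e * s * e.

Definition locally_inverse : Prop :=
  regular /\ forall e, idempotent e -> inverse_sub (local_sub e).

Inductive gen_idem : S -> Prop :=
  | gen_idem_e : forall e, idempotent e -> gen_idem e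
  | gen_idem_mul : forall x y, gen_idem x -> gen_idem y -> gen_idem (x * y).

Definition subgroup (H : subset) : Prop :=
  closed H /\
  exists e, H e /\ (forall h, H h -> e * h = h /\ h * e = h) /\
            (forall h, H h -> exists h', H h' /\ h * h' = e /\ h' * h = e).

Definition completely_regular_sub (A : subset) : Prop :=
  closed A /\
  forall a, A a -> exists H, subgroup H /\ (forall h, H h -> A h) /\ H a.

Definition E_solid : Prop := completely_regular_sub gen_idem.

Definition ideal_sub (A I : subset) : Prop :=
  (forall x, I x -> A x) /\
  (forall a x, A a -> I x -> I (a * x) /\ I (x * a)).

Definition simple_sub (A : subset) : Prop :=
  forall I, ideal_sub A I -> (exists x, I x) -> forall a, A a -> I a.

Definition primitive_idem_sub (A : subset) (f : S) : Prop :=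
  A f /\ idempotent f /\
  forall g, A g -> idempotent g -> g * f = g -> f * g = g -> g = f.

Definition completely_simple_sub (A : subset) : Prop :=
  closed A /\ simple_sub A /\ exists f, primitive_idem_sub A f.

Definition completely_simple : Prop := completely_simple_sub whole.

Definition homomorphism (T : Semigroup) (f : S -> T) : Prop :=
  forall x y, f (x * y) = f x * f y.

Definition congruence (rho : S -> S -> Prop) : Prop :=
  (forall x, rho x x) /\ (forall x y, rho x y -> rho y x) /\
  (forall x y z, rho x y -> rho y z -> rho x z) /\
  (forall x y z, rho x y -> rho (z * x) (z * y) /\ rho (x * z) (y * z)).

(** the inverse of a (meaningful, and unique, in an inverse semigroup) *)
Definition sinv (a : S) : S := epsilon (inhabits a) (is_inverse a).

End Basics.

Arguments whole {S}.
Arguments idempotent {S} e.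
Arguments is_inverse {S} a x.
Arguments congruence {S} rho.
Arguments homomorphism {S T} f.
Arguments completely_simple_sub {S} A.
Arguments sinv {S} a.

(** Left action of T on K by endomorphisms: t |-> eps_t antihomomorphism,
    written act t a = ^t a = a eps_t, so  ^t (^u a) = ^(tu) a. *)
Definition action (T K : Semigroup) (act : T -> K -> K) : Prop :=
  (forall t a b, act t (a * b) = act t a * act t b) /\
  (forall t u a, act t (act u a) = act (t * u) a).

Definition lsd_mem (T K : Semigroup) (act : T -> K -> K) (p : K * T) : Prop :=
  act (snd p * sinv (snd p)) (fst p) = fst p.

Definition lsd_mul (T K : Semigroup) (act : T -> K -> K) (p q : K * T) : K * T :=
  let tu := snd p * snd q in
  (act (tu * sinv tu) (fst p) * act (snd p) (fst q), tu).

Arguments action {T K} act.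
Arguments lsd_mem {T K} act p.
Arguments lsd_mul {T K} act p q.

(** Let [e] be an idempotent of [S] and [f <= q e] an idempotent of [T]. The corner
    [e (q^-1 f) e] is regular and lies in the inverse semigroup [eSe], so it has a single
    idempotent and is a group; its identity acts on the completely simple class [q^-1 f]
    exactly as [e] does. Multiplying [x] on the left by this identity for [e = x x^-1]
    restricts [x] to the class of [f q x], compatibly with products. For each idempotent [o]
    of [T], triples over the R-class of [o] form a completely simple Rees-matrix-like
    semigroup [K_o]; [K] is the product of the [K_o] over [T x E(T)], and [T] acts by
    translating the [T]-index. The embedding sends [x] to [(F_x, q x)], where [F_x] at
    [(v, o)] carries the restriction of [x] along [w = v q x (q x)^-1] when [o = w w^-1]; at
    [v = o = q x (q x)^-1] it carries [x] itself, whence injectivity. *)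

From Stdlib Require Import Setoid ClassicalEpsilon FunctionalExtensionality ProofIrrelevance.

Ltac assoc_r := repeat rewrite <- sg_assoc.
Tactic Notation "assoc_r" "in" hyp(H) := repeat rewrite <- sg_assoc in H.

(* Rewrites with an equation between words at any position of a right-associated word. *)
Ltac arewrite_with H :=
  assoc_r;
  let H1 := fresh in pose proof H as H1;
  let E := type of H1 in let E' := eval hnf in E in change E' in H1; assoc_r in H1;
  let H2 := fresh in
  match type of H1 with ?l = ?r =>
    assert (H2 : forall x, l * x = r * x) by (intro; rewrite H1; reflexivity) end;
  repeat setoid_rewrite <- sg_assoc in H2;
  rewrite ?H2, ?H1; clear H1 H2; assoc_r.
Tactic Notation "arewrite" constr(H) := arewrite_with H.
Tactic Notation "arewrite" "<-" constr(H) :=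
  let H' := fresh in pose proof (eq_sym H) as H'; arewrite_with H'; clear H'.

(** * Completely simple and inverse semigroups *)

Section CompletelySimple.
Variables (S : Semigroup) (A : subset S).
Hypothesis HA : completely_simple_sub A.

Lemma cs_closed x y : A x -> A y -> A (x * y).
Proof. apply HA. Qed.
#[local] Hint Resolve cs_closed : core.

Lemma cs_factor a b : A a -> A b -> exists u v, A u /\ A v /\ b = u * a * v.
Proof.
  intros Ha Hb.
  set (I := fun z => exists u v, A u /\ A v /\ z = u * a * v).
  assert (HI : ideal_sub A I).
  { split.
    - intros z (u & v & Hu & Hv & ->). auto.
    - intros c z Hc (u & v & Hu & Hv & ->). split.
      + exists (c * u), v. repeat split; auto. assoc_r; reflexivity.
      + exists u, (v * c). repeat split; auto. assoc_r; reflexivity. }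
  apply (proj1 (proj2 HA) I HI); auto. exists (a * a * a), a, a. auto.
Qed.

Section Primitive.
Variable p : S.
Hypothesis Hp : primitive_idem_sub A p.

Let Hp_in : A p := proj1 Hp.
Let Hpp : p * p = p := proj1 (proj2 Hp).
#[local] Hint Resolve Hp_in : core.

Lemma corner_fix_l z : p * z * p = z -> p * z = z.
Proof. intros Hz. rewrite <- Hz. arewrite Hpp. reflexivity. Qed.

Lemma corner_fix_r z : p * z * p = z -> z * p = z.
Proof. intros Hz. rewrite <- Hz. arewrite Hpp. reflexivity. Qed.

(* Simplicity gives [p = m z n]; primitivity of [p] forces the idempotent [z r] to be [p]. *)
Lemma corner_right_inverse z :
  A z -> p * z * p = z -> exists r, A r /\ p * r * p = r /\ z * r = p.
Proof.
  intros Hz Hzp.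
  destruct (cs_factor z p Hz Hp_in) as (m & n & Hm & Hn & Hmn).
  assert (Hab : p * m * p * z * (p * n * p) = p).
  { arewrite Hzp. arewrite <- Hmn. arewrite Hpp. arewrite Hpp. reflexivity. }
  exists (p * n * p * (p * m * p)). split; [auto | split].
  - arewrite Hpp. reflexivity.
  - apply (proj2 (proj2 Hp)); auto.
    + unfold idempotent.
      transitivity (z * (p * n * p) * (p * m * p * z * (p * n * p)) * (p * m * p)).
      * assoc_r. reflexivity.
      * rewrite Hab. arewrite Hpp. reflexivity.
    + arewrite Hpp. reflexivity.
    + pose proof (corner_fix_l z Hzp) as Hpz. arewrite Hpz. reflexivity.
Qed.

Lemma corner_inverse z :
  A z -> p * z * p = z -> exists r, A r /\ p * r * p = r /\ z * r = p /\ r * z = p.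
Proof.
  intros Hz Hzp.
  destruct (corner_right_inverse z Hz Hzp) as (r & Hr & Hrp & Hzr).
  destruct (corner_right_inverse r Hr Hrp) as (r' & _ & Hr'p & Hrr').
  enough (z = r') by (subst; exists r; auto).
  rewrite <- (corner_fix_r z Hzp), <- Hrr', sg_assoc, Hzr.
  apply corner_fix_l, Hr'p.
Qed.

Lemma cs_decompose c : A c -> exists s t tr sl,
  A s /\ A t /\ A tr /\ A sl /\
  c = s * p * t /\ s * p = s /\ p * t = t /\ t * tr = p /\ sl * s = p.
Proof.
  intros Hc.
  destruct (cs_factor p c Hp_in Hc) as (s0 & t0 & Hs0 & Ht0 & Hc0).
  destruct (cs_factor c p Hc Hp_in) as (x & y & Hx & Hy & Hp0).
  set (s := s0 * p). set (t := p * t0).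
  assert (Hsp : s * p = s) by (unfold s; arewrite Hpp; reflexivity).
  assert (Hpt : p * t = t) by (unfold t; arewrite Hpp; reflexivity).
  assert (Hc' : c = s * p * t) by (rewrite Hc0; unfold s, t; arewrite Hpp; arewrite Hpp; reflexivity).
  set (tau := p * t * y * p). set (sig := p * x * s * p).
  assert (Hst : sig * tau = p).
  { unfold sig, tau. arewrite Hpp. arewrite <- Hc'. arewrite <- Hp0. arewrite Hpp. arewrite Hpp.
    reflexivity. }
  assert (Htau : p * tau * p = tau) by (unfold tau; arewrite Hpp; arewrite Hpp; reflexivity).
  destruct (corner_inverse tau ltac:(unfold tau, t; auto) Htau) as (ti & _ & Htip & Htti & _).
  assert (Hsig : sig = ti).
  { transitivity (sig * p). { unfold sig. arewrite Hpp. reflexivity. }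
    rewrite <- Htti, sg_assoc, Hst. apply corner_fix_l, Htip. }
  rewrite <- Hsig in Htti.
  exists s, t, (y * p * sig), (tau * p * x).
  unfold sig, tau in *.
  repeat match goal with |- _ /\ _ => split end; try assumption; try (unfold s, t; auto 10; fail).
  - rewrite <- Hpt at 1. assoc_r. assoc_r in Htti. exact Htti.
  - rewrite <- Hsp. assoc_r. assoc_r in Htti. exact Htti.
Qed.

End Primitive.

Lemma cs_right_divides c d : A c -> A d -> exists z, A z /\ c * d * z = c.
Proof.
  intros Hc Hd. destruct (proj2 (proj2 HA)) as (p & Hp).
  assert (Hpp : p * p = p) by exact (proj1 (proj2 Hp)).
  destruct (cs_decompose p Hp c Hc) as (s & t & _ & _ & Hs & Ht & _ & _ & Hc' & _ & Hpt & _ & _).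
  destruct (cs_decompose p Hp d Hd) as (s' & t' & tr' & _ & Hs' & Ht' & Htr' & _ & Hd' & _ & _ & Httr' & _).
  assert (Hg : p * (p * t * s' * p) * p = p * t * s' * p) by (arewrite Hpp; arewrite Hpp; reflexivity).
  destruct (corner_inverse p Hp (p * t * s' * p) ltac:(pose proof (proj1 Hp); auto 10) Hg)
    as (g & Hg' & _ & Hgg & _).
  exists (tr' * g * t). split; [auto |].
  rewrite Hd', Hc'. arewrite Httr'. arewrite Hpp. arewrite Hgg. reflexivity.
Qed.

Lemma cs_left_divides c d : A c -> A d -> exists z, A z /\ z * d * c = c.
Proof.
  intros Hc Hd. destruct (proj2 (proj2 HA)) as (p & Hp).
  assert (Hpp : p * p = p) by exact (proj1 (proj2 Hp)).
  destruct (cs_decompose p Hp c Hc) as (s & t & _ & _ & Hs & Ht & _ & _ & Hc' & _ & _ & _ & _).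
  destruct (cs_decompose p Hp d Hd) as (s' & t' & _ & sl' & Hs' & Ht' & _ & Hsl' & Hd' & _ & _ & _ & Hsls').
  assert (Hg : p * (p * t' * s * p) * p = p * t' * s * p) by (arewrite Hpp; arewrite Hpp; reflexivity).
  destruct (corner_inverse p Hp (p * t' * s * p) ltac:(pose proof (proj1 Hp); auto 10) Hg)
    as (g & Hg' & _ & _ & Hgg).
  exists (s * g * sl'). split; [auto |].
  rewrite Hd', Hc'. arewrite Hsls'. arewrite Hpp. arewrite Hgg. reflexivity.
Qed.

Lemma cs_regular c : A c -> exists t, A t /\ c * t * c = c.
Proof.
  intros Hc. destruct (proj2 (proj2 HA)) as (p & Hp).
  assert (Hpp : p * p = p) by exact (proj1 (proj2 Hp)).
  destruct (cs_decompose p Hp c Hc)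
    as (s & t & tr & sl & _ & _ & Htr & Hsl & Hc' & _ & _ & Httr & Hsls).
  exists (tr * sl). split; [auto |].
  rewrite Hc'. arewrite Httr. arewrite Hsls. arewrite Hpp. arewrite Hpp. arewrite Hpp. reflexivity.
Qed.

Lemma cs_eq_of_actions a b : A a -> A b ->
  (forall z, A z -> a * z = b * z) -> (forall z, A z -> z * a = z * b) -> a = b.
Proof.
  intros Ha Hb Hl Hr.
  destruct (cs_regular a Ha) as (ta & Hta & Haa).
  destruct (cs_regular b Hb) as (tb & Htb & Hbb).
  assert (E1 : a = a * ta * b) by (rewrite <- Hr by auto; symmetry; exact Haa).
  assert (E2 : b = a * (tb * b)) by (rewrite Hl by auto; rewrite sg_assoc; symmetry; exact Hbb).
  rewrite E1 at 1. rewrite E2. arewrite Haa. reflexivity.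
Qed.

Lemma cs_absorb_l u c : A u -> A c -> u * c * u = c * u -> u * c = c.
Proof.
  intros Hu Hc E. destruct (cs_right_divides c u Hc Hu) as (z & _ & Hz).
  rewrite <- Hz at 1. arewrite E. assoc_r in Hz. exact Hz.
Qed.

Lemma cs_absorb_r u c : A u -> A c -> u * c * u = u * c -> c * u = c.
Proof.
  intros Hu Hc E. destruct (cs_left_divides c u Hc Hu) as (z & _ & Hz).
  rewrite <- Hz at 1. arewrite E. assoc_r in Hz. exact Hz.
Qed.

Lemma cs_commuting_idempotents_eq a b : A a -> A b ->
  idempotent a -> idempotent b -> a * b = b * a -> a = b.
Proof.
  intros Ha Hb Hia Hib C.
  assert (Hba : b * a = a).
  { apply cs_absorb_l; auto. rewrite <- C. assoc_r. rewrite Hib. reflexivity. }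
  assert (Hab : a * b = b).
  { apply cs_absorb_l; auto. rewrite C. assoc_r. rewrite Hia. reflexivity. }
  congruence.
Qed.

End CompletelySimple.
Notation "x ^-1" := (sinv x) (at level 3, left associativity, format "x ^-1").

Lemma completely_simple_sub_ext (S : Semigroup) (A B : subset S) :
  (forall z, A z <-> B z) -> completely_simple_sub A -> completely_simple_sub B.
Proof.
  intros E (Hcl & Hs & p & Hp1 & Hp2 & Hp3). split; [| split].
  - intros x y Hx Hy. apply E, Hcl; apply E; assumption.
  - intros I [HI1 HI2] Hne a Ha. apply (Hs I); try apply E; auto.
    split; intros; [apply E | apply HI2]; auto. apply E; assumption.
  - exists p. split; [apply E; assumption | split; [assumption |]].
    intros g Hg. apply Hp3, E, Hg.
Qed.

Lemma inverse_sub_idempotents_commute (S : Semigroup) (A : subset S) : inverse_sub A ->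
  forall a b, A a -> A b -> idempotent a -> idempotent b -> a * b = b * a.
Proof.
  intros [Hcl Hinv].
  assert (Hswap : forall a b x : S, idempotent a -> idempotent b -> is_inverse (a * b) x ->
                  is_inverse (a * b) (b * x * a)).
  { intros a b x Ha Hb [Hx1 Hx2]. split.
    - assoc_r. arewrite Hb. arewrite Ha. assoc_r in Hx1. exact Hx1.
    - assoc_r in Hx2. rewrite <- Hx2 at 3. arewrite Ha. arewrite Hb. reflexivity. }
  assert (Hid : forall a b, A a -> A b -> idempotent a -> idempotent b -> idempotent (a * b)).
  { intros a b Ha Hb Hia Hib.
    destruct (Hinv (a * b) (Hcl _ _ Ha Hb)) as (x & Hx & Hinvx & Hu).
    assert (Hbxa : b * x * a = x) by (apply Hu; auto using Hswap).
    assert (Hxx : idempotent x).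
    { unfold idempotent. rewrite <- Hbxa. destruct Hinvx as [_ Hx2].
      assoc_r in Hx2. arewrite Hx2. reflexivity. }
    destruct (Hinv x Hx) as (y & Hy & _ & Hu').
    assert (E1 : a * b = y) by (apply Hu'; [auto | split; apply Hinvx]).
    assert (E2 : x = y) by (apply Hu'; [auto | split; rewrite Hxx; exact Hxx]).
    unfold idempotent. rewrite E1, <- E2. exact Hxx. }
  intros a b Ha Hb Hia Hib.
  destruct (Hinv (a * b) (Hcl _ _ Ha Hb)) as (x & Hx & _ & Hu).
  assert (Hab := Hid a b Ha Hb Hia Hib). assert (Hba := Hid b a Hb Ha Hib Hia).
  assert (E1 : a * b = x) by (apply Hu; [auto | split; rewrite Hab; exact Hab]).
  assert (E2 : b * a = x).
  { apply Hu; [auto |]. split.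
    - arewrite Hib. arewrite Hia. arewrite Hab. reflexivity.
    - arewrite Hia. arewrite Hib. arewrite Hba. reflexivity. }
  congruence.
Qed.

Lemma simple_of_factorization (K : Semigroup) :
  (forall a b : K, exists l r, b = l * a * r) -> simple_sub (@whole K).
Proof.
  intros Hf J [_ HJ] [a Ha] b _. destruct (Hf a b) as (l & r & ->).
  apply (HJ r); [exact I |]. apply (HJ l); [exact I | exact Ha].
Qed.

Section Product.
Variables (Idx : Type) (K : Idx -> Semigroup).

Lemma prod_assoc (a b c : forall i, K i) :
  (fun i => a i * (fun i => b i * c i) i) = (fun i => (fun i => a i * b i) i * c i).
Proof. apply functional_extensionality_dep. intro i. apply sg_assoc. Qed.

Definition prod_sg : Semigroup :=
  {| sg_car := forall i, K i; sg_op := fun a b i => a i * b i; sg_assoc := prod_assoc |}.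

Lemma prod_completely_simple :
  (forall i, completely_simple (K i)) -> completely_simple prod_sg.
Proof.
  intros HK. split; [| split].
  - intros x y _ _. exact I.
  - apply simple_of_factorization. intros a b.
    assert (Hlr : forall i, {lr : K i * K i | b i = fst lr * a i * snd lr}).
    { intro i. apply constructive_indefinite_description.
      destruct (cs_factor (K i) whole (HK i) (a i) (b i) I I) as (l & r & _ & _ & E).
      exists (l, r). exact E. }
    exists (fun i => fst (proj1_sig (Hlr i))), (fun i => snd (proj1_sig (Hlr i))).
    apply functional_extensionality_dep. intro i. exact (proj2_sig (Hlr i)).
  - assert (Hp : forall i, {p : K i | primitive_idem_sub whole p}).
    { intro i. apply constructive_indefinite_description, HK. }
    exists (fun i => proj1_sig (Hp i)). split; [exact I | split].
    + apply functional_extensionality_dep. intro i. exact (proj1 (proj2 (proj2_sig (Hp i)))).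
    + intros g _ Hg Hgp Hpg. apply functional_extensionality_dep. intro i.
      apply (proj2_sig (Hp i)); [exact I | ..].
      * exact (f_equal (fun h : prod_sg => h i) Hg).
      * exact (f_equal (fun h : prod_sg => h i) Hgp).
      * exact (f_equal (fun h : prod_sg => h i) Hpg).
Qed.

End Product.

Section InverseSemigroup.
Variable T : Semigroup.
Hypothesis HT : inverse_semigroup T.
Implicit Types t u e f : T.

Lemma sinv_spec t : is_inverse t t^-1.
Proof.
  unfold sinv. apply epsilon_spec. destruct (proj2 HT t I) as (x & _ & Hx & _). eauto.
Qed.

Lemma sinv_unique t y : is_inverse t y -> y = t^-1.
Proof.
  intros Hy. destruct (proj2 HT t I) as (x & _ & _ & Hu).
  rewrite (Hu y I Hy). symmetry. apply Hu; [exact I | apply sinv_spec].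
Qed.

Lemma mul_sinv_mul t : t * t^-1 * t = t.
Proof. apply sinv_spec. Qed.

Lemma sinv_mul_sinv t : t^-1 * t * t^-1 = t^-1.
Proof. apply sinv_spec. Qed.

Lemma idempotents_commute e f : idempotent e -> idempotent f -> e * f = f * e.
Proof. intros. apply (inverse_sub_idempotents_commute T whole HT); auto; exact I. Qed.

Lemma idempotent_mul_sinv t : idempotent (t * t^-1).
Proof. unfold idempotent. arewrite (sinv_mul_sinv t). reflexivity. Qed.

Lemma idempotent_sinv_mul t : idempotent (t^-1 * t).
Proof. unfold idempotent. arewrite (mul_sinv_mul t). reflexivity. Qed.

Lemma sinvK t : t^-1^-1 = t.
Proof. symmetry. apply sinv_unique. split; [apply sinv_mul_sinv | apply mul_sinv_mul]. Qed.

Lemma sinv_idempotent e : idempotent e -> e^-1 = e.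
Proof. intros He. symmetry. apply sinv_unique. split; rewrite He; exact He. Qed.

Lemma sinv_mul t u : (t * u)^-1 = u^-1 * t^-1.
Proof.
  symmetry. apply sinv_unique.
  pose proof (idempotents_commute _ _ (idempotent_mul_sinv u) (idempotent_sinv_mul t)) as C.
  split.
  - transitivity (t * (u * u^-1 * (t^-1 * t)) * u); [assoc_r; reflexivity |].
    rewrite C. arewrite (mul_sinv_mul t). arewrite (mul_sinv_mul u). reflexivity.
  - transitivity (u^-1 * (t^-1 * t * (u * u^-1)) * t^-1); [assoc_r; reflexivity |].
    rewrite <- C. arewrite (sinv_mul_sinv t). arewrite (sinv_mul_sinv u). reflexivity.
Qed.

Lemma range_mul_le t u : t * u * (t * u)^-1 * (t * t^-1) = t * u * (t * u)^-1.
Proof. rewrite sinv_mul. arewrite (sinv_mul_sinv t). reflexivity. Qed.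

Lemma range_mul_conj t u : t * u * (t * u)^-1 * t = t * (u * u^-1).
Proof.
  rewrite sinv_mul.
  transitivity (t * (u * u^-1 * (t^-1 * t))); [assoc_r; reflexivity |].
  rewrite (idempotents_commute _ _ (idempotent_mul_sinv u) (idempotent_sinv_mul t)).
  arewrite (mul_sinv_mul t). reflexivity.
Qed.

Lemma sinv_mul_range t : t^-1 * (t * t^-1) = t^-1.
Proof. rewrite sg_assoc. apply sinv_mul_sinv. Qed.

Lemma range_mul_below w t : w * (t * t^-1) = w -> w * t * (w * t)^-1 = w * w^-1.
Proof.
  intros Hw. rewrite sinv_mul.
  transitivity (w * (t * t^-1) * w^-1); [assoc_r; reflexivity | rewrite Hw; reflexivity].
Qed.

Lemma below_range_mul f t u :
  f * (t * u * (t * u)^-1) = f -> f * (t * t^-1) = f.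
Proof. intros Hf. rewrite <- Hf at 1. rewrite <- sg_assoc, range_mul_le. exact Hf. Qed.

Lemma idempotent_sinv_conj f t :
  idempotent f -> f * (t * t^-1) = f -> idempotent (t^-1 * f * t).
Proof. intros Hff Hf. unfold idempotent. arewrite Hf. arewrite Hff. reflexivity. Qed.

Lemma sinv_conj_below_range f t u :
  f * (t * u * (t * u)^-1) = f -> t^-1 * f * t * (u * u^-1) = t^-1 * f * t.
Proof.
  intros Hf. rewrite <- (sg_assoc _ (t^-1 * f) t), <- range_mul_conj.
  arewrite Hf. reflexivity.
Qed.

End InverseSemigroup.

Section RegularHomomorphism.
Variables (S T : Semigroup) (q : S -> T).
Hypothesis HS : regular S.
Hypothesis Hq_hom : homomorphism q.
Hypothesis HT : inverse_semigroup T.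

(* In the regular semigroup [S], [x^-1] is just some inverse of [x]. *)
Lemma regular_sinv_spec (x : S) : is_inverse x x^-1.
Proof.
  unfold sinv. apply epsilon_spec. destruct (HS x I) as (y & _ & Hy).
  exists (y * x * y). split; arewrite Hy; arewrite Hy; reflexivity.
Qed.

Lemma idempotent_mul_regular_sinv (x : S) : idempotent (x * x^-1).
Proof. unfold idempotent. arewrite (proj1 (regular_sinv_spec x)). reflexivity. Qed.

Lemma hom_sinv (x : S) : q x^-1 = (q x)^-1.
Proof.
  apply sinv_unique; [exact HT |].
  split; rewrite <- !Hq_hom; f_equal; apply regular_sinv_spec.
Qed.

Lemma hom_mul_sinv (x : S) : q (x * x^-1) = q x * (q x)^-1.
Proof. rewrite Hq_hom, hom_sinv. reflexivity. Qed.

Lemma hom_idempotent (e : S) : idempotent e -> idempotent (q e).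
Proof. intros He. unfold idempotent. rewrite <- Hq_hom, He. reflexivity. Qed.

Lemma idempotent_class_cs :
  (forall t, exists x, q x = t) ->
  (forall e : S, idempotent e -> completely_simple_sub (fun x => q x = q e)) ->
  forall f, idempotent f -> completely_simple_sub (fun x => q x = f).
Proof.
  intros Hq_surj Hcs f Hf. destruct (Hq_surj f) as (z & Hz).
  assert (Hzz : q (z * z^-1) = f).
  { rewrite hom_mul_sinv, Hz, (sinv_idempotent T HT f Hf). exact Hf. }
  apply (completely_simple_sub_ext S (fun x => q x = q (z * z^-1))).
  - intro y. rewrite Hzz. reflexivity.
  - apply Hcs, idempotent_mul_regular_sinv.
Qed.

End RegularHomomorphism.

(** * Local units and restrictions *)

Section Construction.
Variables (S T : Semigroup) (q : S -> T).
Hypothesis HS : locally_inverse S.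
Hypothesis Hq_hom : homomorphism q.
Hypothesis Hq_surj : forall t, exists x, q x = t.
Hypothesis HT : inverse_semigroup T.
Hypothesis Hclass : forall f, idempotent f -> completely_simple_sub (fun x => q x = f).

Let HSreg : regular S := proj1 HS.
Let mul_sinv_mul_S (x : S) : x * x^-1 * x = x := proj1 (regular_sinv_spec S HSreg x).
Let idem_mul_sinv_S (x : S) : idempotent (x * x^-1) := idempotent_mul_regular_sinv S HSreg x.
Let idem_mul_sinv_T (t : T) : idempotent (t * t^-1) := idempotent_mul_sinv T HT t.

Section LocalUnit.
Variables (e : S) (f : T).
Hypotheses (He : idempotent e) (Hf : idempotent f) (Hfe : f * q e = f).

Let HC : completely_simple_sub (fun z => q z = f) := Hclass f Hf.

Definition corner (z : S) : Prop := q z = f /\ e * z = z /\ z * e = z.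

Lemma corner_sandwich z : q z = f -> corner (e * z * e).
Proof.
  intros Hz. split; [| split].
  - rewrite !Hq_hom, Hz, (idempotents_commute T HT _ _ (hom_idempotent S T q Hq_hom e He) Hf).
    rewrite !Hfe. reflexivity.
  - arewrite He. reflexivity.
  - arewrite He. reflexivity.
Qed.

Lemma corner_mul a b : corner a -> corner b -> corner (a * b).
Proof.
  intros (Ha & Hea & Hae) (Hb & Heb & Hbe). split; [| split].
  - rewrite Hq_hom, Ha, Hb. exact Hf.
  - rewrite sg_assoc, Hea. reflexivity.
  - rewrite <- sg_assoc, Hbe. reflexivity.
Qed.

Lemma corner_regular z : corner z -> exists k, corner k /\ z * k * z = z.
Proof.
  intros Hz. destruct (cs_regular S _ HC z (proj1 Hz)) as (k & Hk & Hzk).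
  exists (e * k * e). split; [exact (corner_sandwich k Hk) |].
  destruct Hz as (_ & Hez & Hze).
  transitivity (z * e * k * (e * z)); [assoc_r; reflexivity |].
  rewrite Hze, Hez. exact Hzk.
Qed.

(* The corner lies in the local submonoid [eSe], whose idempotents commute. *)
Lemma corner_idempotents_eq a b :
  corner a -> corner b -> idempotent a -> idempotent b -> a = b.
Proof.
  intros Ha Hb Hia Hib.
  assert (Hloc : forall z, corner z -> local_sub S e z).
  { intros z (_ & Hez & Hze). exists z. rewrite Hez, Hze. reflexivity. }
  apply (cs_commuting_idempotents_eq S _ HC); try apply Ha; try apply Hb; auto.
  apply (inverse_sub_idempotents_commute S _ (proj2 HS e He)); auto.
Qed.

Lemma corner_unit : exists u, corner u /\ forall z, corner z -> u * z = z /\ z * u = z.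
Proof.
  assert (Hunit : forall z k, corner z -> corner k -> z * k * z = z ->
                  idempotent (z * k) /\ idempotent (k * z)).
  { intros z k _ _ Hzk. split; unfold idempotent; arewrite Hzk; reflexivity. }
  destruct (proj2 (proj2 HC)) as (p & Hp & _).
  pose proof (corner_sandwich p Hp) as Hz0.
  destruct (corner_regular _ Hz0) as (k & Hk & Hzk).
  exists (e * p * e * k). split; [exact (corner_mul _ _ Hz0 Hk) |].
  intros z Hz. destruct (corner_regular z Hz) as (l & Hl & Hzl).
  destruct (Hunit _ _ Hz0 Hk Hzk) as [Hu _]. destruct (Hunit _ _ Hz Hl Hzl) as [Hzl1 Hzl2].
  assert (E1 : z * l = e * p * e * k) by (apply corner_idempotents_eq; auto using corner_mul).
  assert (E2 : l * z = e * p * e * k) by (apply corner_idempotents_eq; auto using corner_mul).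
  split; [rewrite <- E1 | rewrite <- E2, sg_assoc]; exact Hzl.
Qed.

Lemma local_unit_exists :
  exists u, q u = f /\ forall y, q y = f -> u * y = e * y /\ y * u = y * e.
Proof.
  destruct corner_unit as (u & (Hu & Heu & Hue) & Hunit).
  exists u. split; [exact Hu |]. intros y Hy.
  assert (Hqe : q e * f = f).
  { rewrite (idempotents_commute T HT _ _ (hom_idempotent S T q Hq_hom e He) Hf). exact Hfe. }
  split.
  - assert (Hey : q (e * y) = f) by (rewrite Hq_hom, Hy; exact Hqe).
    assert (Hc : corner (e * y * u)).
    { split; [| split].
      - rewrite Hq_hom, Hey, Hu. exact Hf.
      - arewrite He. reflexivity.
      - rewrite <- sg_assoc, Hue. reflexivity. }
    assert (Habs : u * (e * y) = e * y).
    { apply (cs_absorb_l S _ HC); [exact Hu | exact Hey |].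
      rewrite <- sg_assoc. exact (proj1 (Hunit _ Hc)). }
    rewrite <- Habs, sg_assoc, Hue. reflexivity.
  - assert (Hye : q (y * e) = f) by (rewrite Hq_hom, Hy; exact Hfe).
    assert (Hc : corner (u * (y * e))).
    { split; [| split].
      - rewrite Hq_hom, Hye, Hu. exact Hf.
      - rewrite sg_assoc, Heu. reflexivity.
      - arewrite He. reflexivity. }
    assert (Habs : y * e * u = y * e).
    { apply (cs_absorb_r S _ HC); [exact Hu | exact Hye |]. exact (proj2 (Hunit _ Hc)). }
    rewrite <- Habs, <- sg_assoc, Heu. reflexivity.
Qed.

End LocalUnit.

Definition local_unit (e : S) (f : T) : S :=
  epsilon (inhabits e)
    (fun u => q u = f /\ forall y, q y = f -> u * y = e * y /\ y * u = y * e).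

Lemma local_unit_spec e f : idempotent e -> idempotent f -> f * q e = f ->
  q (local_unit e f) = f /\
  forall y, q y = f -> local_unit e f * y = e * y /\ y * local_unit e f = y * e.
Proof. intros. unfold local_unit. apply epsilon_spec, local_unit_exists; assumption. Qed.

Lemma mul_local_unit e h (c : S) : idempotent e -> idempotent h -> h * q e = h ->
  q (c^-1 * c) = h -> c * local_unit e h = c * e.
Proof.
  intros He Hh Hhe Hc. destruct (local_unit_spec e h He Hh Hhe) as [_ Hu].
  transitivity (c * (c^-1 * c * local_unit e h)); [arewrite (mul_sinv_mul_S c); reflexivity |].
  rewrite (proj2 (Hu _ Hc)). arewrite (mul_sinv_mul_S c). reflexivity.
Qed.

Lemma local_unit_mul_below e d f :
  idempotent e -> idempotent d -> e * d = d -> idempotent f -> f * q d = f ->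
  local_unit e f * d = local_unit d f.
Proof.
  intros He Hd Hed Hf Hfd.
  pose proof (hom_idempotent S T q Hq_hom e He) as Hqe.
  pose proof (hom_idempotent S T q Hq_hom d Hd) as Hqd.
  assert (Hfe : f * q e = f).
  { rewrite <- Hfd at 1. rewrite <- sg_assoc, (idempotents_commute T HT _ _ Hqd Hqe).
    rewrite <- Hq_hom, Hed. exact Hfd. }
  destruct (local_unit_spec e f He Hf Hfe) as [Hu1 H1].
  destruct (local_unit_spec d f Hd Hf Hfd) as [Hu2 H2].
  apply (cs_eq_of_actions S _ (Hclass f Hf)).
  - rewrite Hq_hom, Hu1. exact Hfd.
  - exact Hu2.
  - intros z Hz.
    assert (Hdz : q (d * z) = f).
    { rewrite Hq_hom, Hz, (idempotents_commute T HT _ _ Hqd Hf). exact Hfd. }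
    rewrite (proj1 (H2 z Hz)), <- sg_assoc, (proj1 (H1 _ Hdz)), sg_assoc, Hed. reflexivity.
  - intros z Hz.
    rewrite (proj2 (H2 z Hz)), sg_assoc, (proj2 (H1 z Hz)), <- sg_assoc, Hed. reflexivity.
Qed.

Definition restrict (f : T) (x : S) : S := local_unit (x * x^-1) f * x.

Lemma hom_restrict f x :
  idempotent f -> f * (q x * (q x)^-1) = f -> q (restrict f x) = f * q x.
Proof.
  intros Hf Hfx. rewrite <- hom_mul_sinv in Hfx by assumption.
  unfold restrict. rewrite Hq_hom, (proj1 (local_unit_spec _ _ (idem_mul_sinv_S x) Hf Hfx)). reflexivity.
Qed.

Lemma restrict_id x : restrict (q x * (q x)^-1) x = x.
Proof.
  pose proof (hom_mul_sinv S T q HSreg Hq_hom HT x) as Hx.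
  destruct (local_unit_spec (x * x^-1) (q x * (q x)^-1) (idem_mul_sinv_S x) (idem_mul_sinv_T (q x)))
    as [_ Hu]; [rewrite Hx; apply idem_mul_sinv_T |].
  unfold restrict.
  transitivity (local_unit (x * x^-1) (q x * (q x)^-1) * (x * x^-1) * x);
    [arewrite (mul_sinv_mul_S x); reflexivity |].
  rewrite (proj1 (Hu _ Hx)), (idem_mul_sinv_S x). apply mul_sinv_mul_S.
Qed.

Lemma restrict_mul f x y : idempotent f -> f * (q (x * y) * (q (x * y))^-1) = f ->
  restrict f x * restrict ((q x)^-1 * f * q x) y = restrict f (x * y).
Proof.
  intros Hf Hfd. pose proof Hfd as Hfxy. rewrite Hq_hom in Hfxy.
  set (h := (q x)^-1 * f * q x).
  assert (Hfx : f * (q x * (q x)^-1) = f) by exact (below_range_mul T HT _ _ _ Hfxy).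
  assert (Hh : idempotent h) by exact (idempotent_sinv_conj T f (q x) Hf Hfx).
  assert (Hhy : h * q (y * y^-1) = h).
  { rewrite hom_mul_sinv by assumption. exact (sinv_conj_below_range T HT _ _ _ Hfxy). }
  assert (Hc : q ((restrict f x)^-1 * restrict f x) = h).
  { rewrite Hq_hom, hom_sinv, hom_restrict, sinv_mul, (sinv_idempotent T HT f Hf) by assumption.
    unfold h. arewrite Hf. reflexivity. }
  unfold restrict at 2. rewrite sg_assoc, (mul_local_unit _ _ _ (idem_mul_sinv_S y) Hh Hhy Hc).
  rewrite <- (sg_assoc _ (restrict f x)), (mul_sinv_mul_S y).
  assert (Hxd : x * x^-1 * (x * y * (x * y)^-1) = x * y * (x * y)^-1).
  { arewrite (mul_sinv_mul_S x). reflexivity. }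
  unfold restrict.
  rewrite <- (local_unit_mul_below _ _ f (idem_mul_sinv_S x) (idem_mul_sinv_S (x * y)) Hxd Hf)
    by (rewrite hom_mul_sinv by assumption; exact Hfd).
  arewrite (mul_sinv_mul_S (x * y)). reflexivity.
Qed.

(** * The semigroup [K] and the embedding *)

(* The cells of the block of [o] form a Rees-matrix-like semigroup indexed by the R-class
   of [o] in [T], with sandwich elements taken from the classes [q^-1 (u^-1 * w)]. *)
Record cell := Cell { c_row : T; c_val : S; c_col : T }.

Definition in_block (o : T) (a : cell) : Prop :=
  c_row a * (c_row a)^-1 = o /\ c_col a * (c_col a)^-1 = o /\
  q (c_val a) = (c_row a)^-1 * c_col a.

Definition sandwich (u w : T) : S :=
  proj1_sig (constructive_indefinite_description _ (Hq_surj (u^-1 * w))).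

Lemma hom_sandwich u w : q (sandwich u w) = u^-1 * w.
Proof. exact (proj2_sig (constructive_indefinite_description _ (Hq_surj (u^-1 * w)))). Qed.

(* Matching indices get no sandwich, so that [idem_cell] is idempotent and [psi] is
   multiplicative. *)
Definition cell_mul (a b : cell) : cell :=
  Cell (c_row a)
    (if excluded_middle_informative (c_col a = c_row b) then c_val a * c_val b
     else c_val a * sandwich (c_col a) (c_row b) * c_val b)
    (c_col b).

Lemma cell_mul_match a b :
  c_col a = c_row b -> cell_mul a b = Cell (c_row a) (c_val a * c_val b) (c_col b).
Proof.
  intros E. unfold cell_mul. destruct (excluded_middle_informative _); [reflexivity | contradiction].
Qed.

Lemma cell_mul_assoc a b c : cell_mul a (cell_mul b c) = cell_mul (cell_mul a b) c.
Proof.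
  destruct a as [a1 a2 a3], b as [b1 b2 b3], c as [c1 c2 c3]. unfold cell_mul; simpl. f_equal.
  destruct (excluded_middle_informative (a3 = b1)), (excluded_middle_informative (b3 = c1));
    assoc_r; reflexivity.
Qed.

Lemma in_block_mul o a b :
  idempotent o -> in_block o a -> in_block o b -> in_block o (cell_mul a b).
Proof.
  intros Ho (Ha1 & Ha2 & Ha3) (Hb1 & Hb2 & Hb3). split; [exact Ha1 | split; [exact Hb2 |]].
  assert (Hro : (c_row a)^-1 * o = (c_row a)^-1) by (rewrite <- Ha1; apply sinv_mul_range, HT).
  unfold cell_mul; simpl. destruct (excluded_middle_informative _) as [E | E];
    rewrite !Hq_hom, Ha3, Hb3; [rewrite <- E | rewrite hom_sandwich];
    arewrite Ha2; try (arewrite Hb1; arewrite Ho); arewrite Hro; reflexivity.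
Qed.

Lemma block_factor o a b : idempotent o -> in_block o a -> in_block o b ->
  exists l r, in_block o l /\ in_block o r /\ b = cell_mul (cell_mul l a) r.
Proof.
  intros Ho (Ha1 & Ha2 & Ha3) (Hb1 & Hb2 & Hb3).
  destruct a as [w x u], b as [w' y u']; simpl in *.
  pose proof (sinv_mul_range T HT w') as Iw'. pose proof (sinv_mul_range T HT u') as Iu'.
  rewrite Hb1 in Iw'. rewrite Hb2 in Iu'.
  set (c := sandwich w' w * x * sandwich u u').
  assert (Hqc : q c = w'^-1 * u').
  { unfold c. rewrite !Hq_hom, !hom_sandwich, Ha3.
    arewrite Ha1. arewrite Ha2. arewrite Ho. arewrite Iw'. reflexivity. }
  set (R := w'^-1 * u' * (w'^-1 * u')^-1).
  assert (HRe : R = w'^-1 * u' * (u'^-1 * w')).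
  { unfold R. rewrite (sinv_mul T HT), (sinvK T HT). reflexivity. }
  assert (Hy : q (y * y^-1) = R) by (rewrite hom_mul_sinv, Hb3 by assumption; reflexivity).
  assert (Hc : q (c * c^-1) = R) by (rewrite hom_mul_sinv, Hqc by assumption; reflexivity).
  destruct (cs_factor S _ (Hclass R (idem_mul_sinv_T _)) _ _ Hc Hy) as (l & r & Hl & Hr & Hyy).
  exists (Cell w' (l * sandwich w' w) w), (Cell u (sandwich u u' * c^-1 * r * y) u').
  split; [| split].
  - split; [exact Hb1 | split; [exact Ha1 |]]. simpl.
    rewrite Hq_hom, Hl, hom_sandwich, HRe.
    arewrite Hb2. arewrite Iw'. arewrite (sinv_mul_sinv T HT w'). reflexivity.
  - split; [exact Ha2 | split; [exact Hb2 |]]. simpl.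
    rewrite !Hq_hom, hom_sinv, hom_sandwich, Hqc, Hr, Hb3, HRe, (sinv_mul T HT), (sinvK T HT)
      by assumption.
    arewrite Hb1. arewrite Iu'. arewrite (mul_sinv_mul T HT u'). arewrite Hb1. arewrite Iu'.
    arewrite (mul_sinv_mul T HT u'). reflexivity.
  - rewrite !cell_mul_match by reflexivity. simpl. f_equal.
    rewrite <- (mul_sinv_mul_S y) at 1. rewrite Hyy. unfold c. assoc_r. reflexivity.
Qed.

Definition ET : Type := {o : T | idempotent o}.

Definition block_car (j : ET) : Type := {a : cell | in_block (proj1_sig j) a}.

Definition block_mul (j : ET) (a b : block_car j) : block_car j :=
  exist _ (cell_mul (proj1_sig a) (proj1_sig b))
    (in_block_mul _ _ _ (proj2_sig j) (proj2_sig a) (proj2_sig b)).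

Lemma block_eq j (a b : block_car j) : proj1_sig a = proj1_sig b -> a = b.
Proof. destruct a, b. simpl. intros ->. f_equal. apply proof_irrelevance. Qed.

Lemma block_assoc j (a b c : block_car j) :
  block_mul j a (block_mul j b c) = block_mul j (block_mul j a b) c.
Proof. apply block_eq, cell_mul_assoc. Qed.

Definition block (j : ET) : Semigroup :=
  {| sg_car := block_car j; sg_op := block_mul j; sg_assoc := block_assoc j |}.

Definition class_idem (j : ET) : S :=
  proj1_sig (constructive_indefinite_description _ (proj2 (proj2 (Hclass _ (proj2_sig j))))).

Lemma class_idem_primitive j :
  primitive_idem_sub (fun z => q z = proj1_sig j) (class_idem j).
Proof.
  exact (proj2_sig (constructive_indefinite_description _ (proj2 (proj2 (Hclass _ (proj2_sig j)))))).
Qed.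

Definition idem_cell (j : ET) : cell := Cell (proj1_sig j) (class_idem j) (proj1_sig j).

Lemma idem_cell_in_block j : in_block (proj1_sig j) (idem_cell j).
Proof.
  destruct j as [o Ho]. unfold in_block, idem_cell; simpl.
  rewrite (sinv_idempotent T HT o Ho), Ho. split; [reflexivity | split; [reflexivity |]].
  apply (class_idem_primitive (exist _ o Ho)).
Qed.

Lemma idem_cell_idempotent j : cell_mul (idem_cell j) (idem_cell j) = idem_cell j.
Proof.
  rewrite cell_mul_match by reflexivity. unfold idem_cell; simpl.
  rewrite (proj1 (proj2 (class_idem_primitive j))). reflexivity.
Qed.

Definition block_idem (j : ET) : block j := exist _ (idem_cell j) (idem_cell_in_block j).

Lemma block_idem_primitive j : primitive_idem_sub whole (block_idem j).
Proof.
  split; [exact I | split; [apply block_eq, idem_cell_idempotent |]].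
  intros [[w z u] Hin] _ Hg Hgp Hpg. apply block_eq. simpl.
  apply (f_equal (@proj1_sig _ _)) in Hg, Hgp, Hpg. simpl in Hg, Hgp, Hpg.
  destruct j as [o Ho]. unfold idem_cell in *; simpl in *.
  assert (Hu : o = u) by exact (f_equal c_col Hgp).
  assert (Hw : o = w) by exact (f_equal c_row Hpg).
  subst u w. rewrite cell_mul_match in Hg, Hgp, Hpg by reflexivity.
  destruct Hin as (_ & _ & Hz). simpl in Hz. rewrite (sinv_idempotent T HT o Ho), Ho in Hz.
  f_equal. apply (class_idem_primitive (exist _ o Ho)).
  - exact Hz.
  - exact (f_equal c_val Hg).
  - exact (f_equal c_val Hgp).
  - exact (f_equal c_val Hpg).
Qed.

Lemma block_cs j : completely_simple (block j).
Proof.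
  split; [intros x y _ _; exact I | split].
  - apply simple_of_factorization. intros a b.
    destruct (block_factor _ _ _ (proj2_sig j) (proj2_sig a) (proj2_sig b))
      as (l & r & Hl & Hr & E).
    exists (exist _ l Hl), (exist _ r Hr). apply block_eq. exact E.
  - exists (block_idem j). apply block_idem_primitive.
Qed.

Definition K : Semigroup := prod_sg T (fun _ => prod_sg ET block).

Lemma K_cs : completely_simple K.
Proof. apply prod_completely_simple. intros _. apply prod_completely_simple, block_cs. Qed.

Lemma K_eq (F G : K) : (forall v j, proj1_sig (F v j) = proj1_sig (G v j)) -> F = G.
Proof.
  intros E. apply functional_extensionality_dep. intro v.
  apply functional_extensionality_dep. intro j. apply block_eq, E.
Qed.

Definition act (t : T) (F : K) : K := fun v => F (v * t).

Lemma act_action : action act.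
Proof.
  split; [reflexivity |].
  intros t u F. apply functional_extensionality_dep. intro v. unfold act. rewrite sg_assoc. reflexivity.
Qed.

Definition cell_of (x : S) (w : T) (j : ET) : cell :=
  if excluded_middle_informative (proj1_sig j = w * w^-1)
  then Cell w (restrict (w^-1 * w) x) (w * q x)
  else idem_cell j.

Lemma cell_of_in_block x w j :
  w * (q x * (q x)^-1) = w -> in_block (proj1_sig j) (cell_of x w j).
Proof.
  intros Hw. unfold cell_of.
  destruct (excluded_middle_informative _) as [E | _]; [| apply idem_cell_in_block].
  split; [| split]; simpl.
  - symmetry. exact E.
  - rewrite (range_mul_below T HT _ _ Hw). symmetry. exact E.
  - rewrite hom_restrict; [assoc_r; reflexivity | apply idempotent_sinv_mul, HT |].
    rewrite <- sg_assoc, Hw. reflexivity.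
Qed.

Lemma mul_range_below (v t : T) : v * (t * t^-1) * (t * t^-1) = v * (t * t^-1).
Proof. rewrite <- sg_assoc, (idem_mul_sinv_T t). reflexivity. Qed.

Definition psi (x : S) : K * T :=
  (fun v j => exist _ (cell_of x (v * (q x * (q x)^-1)) j)
                (cell_of_in_block x _ j (mul_range_below v (q x))),
   q x).

Lemma psi_lsd_mem x : lsd_mem act (psi x).
Proof. apply K_eq. intros v j. simpl. rewrite mul_range_below. reflexivity. Qed.

Lemma cell_of_mul x y w j : w * (q (x * y) * (q (x * y))^-1) = w ->
  cell_of (x * y) w j = cell_mul (cell_of x w j) (cell_of y (w * q x) j).
Proof.
  intros Hw.
  assert (Hwx : w * (q x * (q x)^-1) = w).
  { rewrite Hq_hom in Hw. exact (below_range_mul T HT _ _ _ Hw). }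
  unfold cell_of. rewrite (range_mul_below T HT _ _ Hwx).
  destruct (excluded_middle_informative (proj1_sig j = w * w^-1)) as [_ | _].
  - rewrite cell_mul_match by reflexivity. simpl. f_equal; [| rewrite Hq_hom; apply sg_assoc].
    rewrite sinv_mul by exact HT. symmetry.
    transitivity (restrict (w^-1 * w) x * restrict ((q x)^-1 * (w^-1 * w) * q x) y);
      [assoc_r; reflexivity |].
    apply restrict_mul; [apply idempotent_sinv_mul, HT |].
    rewrite <- sg_assoc, Hw. reflexivity.
  - symmetry. apply idem_cell_idempotent.
Qed.

Lemma psi_hom x y : psi (x * y) = lsd_mul act (psi x) (psi y).
Proof.
  unfold psi, lsd_mul. simpl. f_equal; [| apply Hq_hom].
  apply K_eq. intros v j. simpl.
  rewrite <- Hq_hom. set (E := q (x * y) * (q (x * y))^-1).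
  assert (A1 : v * E * (q x * (q x)^-1) = v * E).
  { unfold E. rewrite Hq_hom, <- sg_assoc, range_mul_le by exact HT. reflexivity. }
  assert (A2 : v * q x * (q y * (q y)^-1) = v * E * q x).
  { unfold E. rewrite Hq_hom, <- (sg_assoc _ v _ (q x)), range_mul_conj by exact HT.
    assoc_r. reflexivity. }
  rewrite A1, A2. apply cell_of_mul, mul_range_below.
Qed.

Lemma psi_val_at_range x (j : ET) : proj1_sig j = q x * (q x)^-1 ->
  c_val (proj1_sig (fst (psi x) (proj1_sig j) j)) = x.
Proof.
  destruct j as [o Ho]. simpl. intros ->. rewrite (idem_mul_sinv_T (q x)). unfold cell_of.
  rewrite (sinv_idempotent T HT _ (idem_mul_sinv_T (q x))), (idem_mul_sinv_T (q x)).
  destruct (excluded_middle_informative _) as [_ | C]; [apply restrict_id | now elim C].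
Qed.

Lemma psi_injective x y : psi x = psi y -> x = y.
Proof.
  intros H. assert (Hq : q x = q y) by exact (f_equal snd H).
  set (j := exist _ _ (idem_mul_sinv_T (q x)) : ET).
  rewrite <- (psi_val_at_range x j), H by reflexivity.
  apply psi_val_at_range. simpl. rewrite Hq. reflexivity.
Qed.

End Construction.

(* The quotient T = S/rho is presented as a semigroup T together with a
   surjective homomorphism q : S -> T whose kernel is rho. *)
Theorem theorem3p1 (S : Semigroup) (rho : S -> S -> Prop)
  (T : Semigroup) (q : S -> T)
  (HS_solid : E_solid S) (HS_li : locally_inverse S)
  (Hrho : congruence rho)
  (Hq_hom : homomorphism q) (Hq_surj : forall t : T, exists x, q x = t)
  (Hq_ker : forall x y, rho x y <-> q x = q y)
  (HT : inverse_semigroup T)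
  (Hclasses : forall e : S, idempotent e -> completely_simple_sub (fun x => rho x e)) :
  exists (K : Semigroup) (act : T -> K -> K),
    completely_simple K /\ action act /\
    exists psi : S -> K * T,
      (forall x, lsd_mem act (psi x)) /\
      (forall x y, psi (x * y) = lsd_mul act (psi x) (psi y)) /\
      (forall x y, psi x = psi y -> x = y) /\
      (forall x y, rho x y <-> snd (psi x) = snd (psi y)).
Proof.
  assert (Hclass : forall f, idempotent f -> completely_simple_sub (fun x => q x = f)).
  { apply (idempotent_class_cs S T q (proj1 HS_li) Hq_hom HT Hq_surj).
    intros e He. apply (completely_simple_sub_ext S (fun x => rho x e)).
    - intro z. apply Hq_ker.
    - apply Hclasses, He. }
  exists (K S T q Hq_hom Hq_surj HT), (act S T q Hq_hom Hq_surj HT).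
  split; [apply K_cs; assumption | split; [apply act_action |]].
  exists (psi S T q HS_li Hq_hom Hq_surj HT Hclass).
  split; [apply psi_lsd_mem | split; [apply psi_hom | split; [apply psi_injective |]]].
  intros x y. apply Hq_ker.
Qed.
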